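(* Let $A(x)=x^3$ on $J=\mathbb R$ and $\Gamma=\{x+iA(x):x\in\mathbb R\}$. There exist $\delta_0=\delta_0(A)>0$ and $c_0=c_0(A)\in(0,1)$ such that $$\mathtt S[\mathrm{Re}K_\Gamma](\mathbf z)\ge c_0\,M_\epsilon^2$$ for $\mathbf z=(-\epsilon\alpha-i\epsilon^3\alpha^3,\ 0,\ \epsilon\beta+i\epsilon^3\beta^3)$, for all $\alpha,\beta\in[1/2,1]$ and all $0<\epsilon<\min\{1,\delta_0\}$, where $M_\epsilon$ is the Lipschitz constant of the restriction of $A'$ to the interval $(-\epsilon,\epsilon)$.
   Context: $s(x)=\sqrt{1+(A'(x))^2}$. The kernel (normalizing factor $1/(2\pi)$ omitted) is $K_\Gamma(w,z)=\dfrac{A'(x)-i}{s(x)\,[\,x-y+i(A(x)-A(y))\,]}$ for $w=x+iA(x)$, $z=y+iA(y)$, $x\neq y$; $\mathrm{Re}K_\Gamma$ is its real part. For a real-valued $K$ and distinct $z_1,z_2,z_3$, $\mathtt S[K](\mathbf z)=\sum_{\sigma\in S_3}K(z_{\sigma(1)},z_{\sigma(2)})K(z_{\sigma(1)},z_{\sigma(3)})$. The Lipschitz constant of $A'$ on $(-\epsilon,\epsilon)$ is $\sup_{x\neq y\in(-\epsilon,\epsilon)}|A'(x)-A'(y)|/|x-y|$. *)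

From Stdlib Require Import Reals.
From Coquelicot Require Import Coquelicot.
Open Scope R_scope.

Definition A (x : R) : R := x ^ 3.

Definition Ap (x : R) : R := Derive A x.

Definition s (x : R) : R := sqrt (1 + (Ap x) ^ 2).

Definition gamma (x : R) : C := (x, A x).

(* K_Gamma(w,z) for w = gamma x, z = gamma y (normalizing factor omitted):
   (A'(x) - i) / (s(x) [ x - y + i (A(x) - A(y)) ]) *)
Definition KGamma (x y : R) : C :=
  Cdiv (Cminus (RtoC (Ap x)) Ci) (Cmult (RtoC (s x)) (Cminus (gamma x) (gamma y))).

Definition ReKGamma (x y : R) : R := Re (KGamma x y).

(* S[K](z1,z2,z3) = sum over sigma in S_3 of K(z_s1,z_s2) K(z_s1,z_s3);
   points are given by their parameters. *)
Definition Ssym (K : R -> R -> R) (z1 z2 z3 : R) : R :=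
    K z1 z2 * K z1 z3 + K z1 z3 * K z1 z2
  + K z2 z1 * K z2 z3 + K z2 z3 * K z2 z1
  + K z3 z1 * K z3 z2 + K z3 z2 * K z3 z1.

Definition LipSet (eps : R) (r : R) : Prop :=
  exists x y : R, -eps < x < eps /\ -eps < y < eps /\ x <> y /\
    r = Rabs (Ap x - Ap y) / Rabs (x - y).

Definition Meps (eps : R) : R := real (Lub_Rbar (LipSet eps)).

From Stdlib Require Import Reals Lra.
From Coquelicot Require Import Coquelicot.
Open Scope R_scope.

(* Since A' = 3 x^2 and the chord slope of A between x and y is x^2 + x y + y^2,
   Re K_Gamma(x, y) = (2 x + y) / (s(x) (1 + (x^2 + x y + y^2)^2)).  Near 0 all
   denominators are within 1% of 1, so at the points -a, 0, b the symmetrized sum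
   is essentially 2 (4 (a^2 - a b + b^2) - a b) >= 5 a b, which is of order eps^2
   when a, b are comparable to eps; on the other hand the Lipschitz constant of
   3 x^2 on (-eps, eps) is at most 6 eps. *)

Lemma Ap_cube (x : R) : Ap x = 3 * x ^ 2.
Proof. unfold Ap, A. apply is_derive_unique. auto_derive; [easy | ring]. Qed.

Lemma s_pos (x : R) : 0 < s x.
Proof. unfold s. apply sqrt_lt_R0. nra. Qed.

Lemma s_sqr (x : R) : s x ^ 2 = 1 + 9 * x ^ 4.
Proof. unfold s. rewrite <- Rsqr_pow2, Rsqr_sqrt, Ap_cube; [ring | nra]. Qed.

Lemma Re_sub_Ci_div_mult (p r d e : R) : r <> 0 -> (d, e) <> (0, 0) ->
  Re (Cdiv (Cminus (RtoC p) Ci) (Cmult (RtoC r) (d, e))) =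
  (p * d - e) / (r * (d ^ 2 + e ^ 2)).
Proof.
  intros Hr Hde.
  assert (Hn : d ^ 2 + e ^ 2 <> 0).
  { intro H0. apply Hde. f_equal; nra. }
  unfold Cdiv, Cminus, Cmult, Cinv, RtoC, Ci, Re. simpl.
  field. split; [nra | split; [exact Hr |]].
  intro H0. apply Hn.
  apply (Rmult_eq_reg_l (r ^ 2)); [nra | apply pow_nonzero; exact Hr].
Qed.

Lemma ReKGamma_cube (x y : R) : x <> y ->
  ReKGamma x y = (2 * x + y) / (s x * (1 + (x ^ 2 + x * y + y ^ 2) ^ 2)).
Proof.
  intro Hxy.
  assert (Hd : 0 < (x - y) ^ 2) by (apply pow2_gt_0; lra).
  pose proof (s_pos x) as Hs.
  unfold ReKGamma, KGamma, gamma.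
  change (Cminus (x, A x) (y, A y)) with ((x - y, A x - A y) : C).
  rewrite Re_sub_Ci_div_mult, Ap_cube; unfold A.
  - pose proof (pow2_ge_0 (x ^ 3 - y ^ 3)).
    field. split; [nra | split; lra].
  - lra.
  - intro H0. injection H0. lra.
Qed.

Definition cube_kernel_denom (x y z : R) : R :=
  (1 + 9 * x ^ 4) * (1 + (x ^ 2 + x * y + y ^ 2) ^ 2) * (1 + (x ^ 2 + x * z + z ^ 2) ^ 2).

Lemma ReKGamma_mul_cube (x y z : R) : x <> y -> x <> z ->
  ReKGamma x y * ReKGamma x z =
  (2 * x + y) * (2 * x + z) / cube_kernel_denom x y z.
Proof.
  intros Hxy Hxz. unfold cube_kernel_denom.
  pose proof (s_pos x) as Hs.
  rewrite !ReKGamma_cube, <- s_sqr by assumption.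
  field. split; nra.
Qed.

Lemma cube_kernel_denom_ge_1 (x y z : R) : 1 <= cube_kernel_denom x y z.
Proof.
  unfold cube_kernel_denom.
  assert (1 <= 1 + 9 * x ^ 4).
  { replace (x ^ 4) with ((x ^ 2) ^ 2) by ring. pose proof (pow2_ge_0 (x ^ 2)). lra. }
  pose proof (pow2_ge_0 (x ^ 2 + x * y + y ^ 2)).
  pose proof (pow2_ge_0 (x ^ 2 + x * z + z ^ 2)).
  assert (1 <= (1 + 9 * x ^ 4) * (1 + (x ^ 2 + x * y + y ^ 2) ^ 2)) by nra.
  nra.
Qed.

Lemma cube_kernel_denom_le (x y z : R) :
  -1/10 <= x <= 1/10 -> -1/10 <= y <= 1/10 -> -1/10 <= z <= 1/10 ->
  cube_kernel_denom x y z <= 101/100.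
Proof.
  intros Hx Hy Hz. unfold cube_kernel_denom.
  assert (Hq : forall u v, -1/10 <= u <= 1/10 -> -1/10 <= v <= 1/10 ->
            0 <= (u ^ 2 + u * v + v ^ 2) ^ 2 <= 9/10000).
  { intros u v Hu Hv.
    assert (0 <= u ^ 2 + u * v + v ^ 2 <= 3/100) by (split; nra).
    split; nra. }
  assert (0 <= x ^ 4 <= 1/10000).
  { replace (x ^ 4) with ((x ^ 2) ^ 2) by ring.
    assert (0 <= x ^ 2 <= 1/100) by (split; nra). split; nra. }
  pose proof (Hq x y Hx Hy). pose proof (Hq x z Hx Hz).
  set (P := (x ^ 2 + x * y + y ^ 2) ^ 2) in *.
  set (Q := (x ^ 2 + x * z + z ^ 2) ^ 2) in *.
  assert ((1 + 9 * x ^ 4) * (1 + P) <= 1 + 2/1000) by nra.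
  assert (0 <= (1 + 9 * x ^ 4) * (1 + P)) by nra.
  nra.
Qed.

Lemma ReKGamma_mul_ge_nonneg (x y z : R) :
  -1/10 <= x <= 1/10 -> -1/10 <= y <= 1/10 -> -1/10 <= z <= 1/10 ->
  x <> y -> x <> z -> 0 <= (2 * x + y) * (2 * x + z) ->
  100/101 * ((2 * x + y) * (2 * x + z)) <= ReKGamma x y * ReKGamma x z.
Proof.
  intros Hx Hy Hz Hxy Hxz Hn.
  rewrite ReKGamma_mul_cube by assumption.
  pose proof (cube_kernel_denom_ge_1 x y z).
  pose proof (cube_kernel_denom_le x y z Hx Hy Hz).
  assert (100/101 <= / cube_kernel_denom x y z).
  { replace (100/101) with (/ (101/100)) by field. apply Rinv_le_contravar; lra. }
  unfold Rdiv. nra.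
Qed.

Lemma ReKGamma_mul_ge_nonpos (x y z : R) : x <> y -> x <> z ->
  (2 * x + y) * (2 * x + z) <= 0 ->
  (2 * x + y) * (2 * x + z) <= ReKGamma x y * ReKGamma x z.
Proof.
  intros Hxy Hxz Hn.
  rewrite ReKGamma_mul_cube by assumption.
  pose proof (cube_kernel_denom_ge_1 x y z).
  assert (0 < / cube_kernel_denom x y z <= 1).
  { split; [apply Rinv_0_lt_compat; lra |].
    rewrite <- Rinv_1. apply Rinv_le_contravar; lra. }
  unfold Rdiv. nra.
Qed.

Lemma Ssym_pairs (K : R -> R -> R) (x y z : R) :
  Ssym K x y z = 2 * (K x y * K x z + K y x * K y z + K z x * K z y).
Proof. unfold Ssym. ring. Qed.

Lemma Ssym_ReKGamma_ge (a b : R) : 0 < a <= 1/10 -> 0 < b <= 1/10 ->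
  b <= 2 * a -> a <= 2 * b ->
  5 * (a * b) <= Ssym ReKGamma (- a) 0 b.
Proof.
  intros Ha Hb Hba Hab.
  rewrite Ssym_pairs.
  pose proof (ReKGamma_mul_ge_nonneg (- a) 0 b ltac:(lra) ltac:(lra) ltac:(lra)
                ltac:(lra) ltac:(lra) ltac:(nra)) as Hleft.
  pose proof (ReKGamma_mul_ge_nonpos 0 (- a) b ltac:(lra) ltac:(lra) ltac:(nra)) as Hmid.
  pose proof (ReKGamma_mul_ge_nonneg b (- a) 0 ltac:(lra) ltac:(lra) ltac:(lra)
                ltac:(lra) ltac:(lra) ltac:(nra)) as Hright.
  pose proof (pow2_ge_0 (a - b)).
  nra.
Qed.

Lemma LipSet_bounds (eps r : R) : LipSet eps r -> 0 <= r <= 6 * eps.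
Proof.
  intros (x & y & Hx & Hy & Hxy & ->).
  rewrite !Ap_cube.
  replace (3 * x ^ 2 - 3 * y ^ 2) with (3 * (x + y) * (x - y)) by ring.
  assert (Hd : 0 < Rabs (x - y)) by (apply Rabs_pos_lt; lra).
  rewrite Rabs_mult. unfold Rdiv. rewrite Rmult_assoc, Rinv_r, Rmult_1_r by lra.
  rewrite Rabs_mult, (Rabs_right 3) by lra.
  pose proof (Rabs_pos (x + y)).
  assert (Rabs (x + y) <= 2 * eps) by (apply Rabs_le; lra).
  lra.
Qed.

Lemma Meps_bounds (eps : R) : 0 < eps -> 0 <= Meps eps <= 6 * eps.
Proof.
  intro He. unfold Meps.
  destruct (Lub_Rbar_correct (LipSet eps)) as [Hub Hleast].
  assert (Hwit : LipSet eps (Rabs (Ap 0 - Ap (eps / 2)) / Rabs (0 - eps / 2))).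
  { exists 0, (eps / 2). repeat split; lra. }
  pose proof (LipSet_bounds _ _ Hwit) as [Hwit0 _].
  specialize (Hub _ Hwit).
  specialize (Hleast (6 * eps) (fun r Hr => proj2 (LipSet_bounds eps r Hr))).
  destruct (Lub_Rbar (LipSet eps)); simpl in *; lra.
Qed.

Theorem lemma1p4 :
  exists delta0 c0 : R, 0 < delta0 /\ 0 < c0 < 1 /\
    forall alpha beta eps : R,
      1/2 <= alpha <= 1 -> 1/2 <= beta <= 1 ->
      0 < eps < Rmin 1 delta0 ->
      Ssym ReKGamma (- (eps * alpha)) 0 (eps * beta) >= c0 * (Meps eps) ^ 2.
Proof.
  exists (1/10), (1/50).
  split; [lra | split; [lra |]].
  intros alpha beta eps Halpha Hbeta Heps.
  rewrite Rmin_right in Heps by lra.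
  destruct (Meps_bounds eps) as [HM0 HM1]; [lra |].
  assert (HMsq : Meps eps ^ 2 <= 36 * eps ^ 2) by nra.
  assert (Heps2 : eps ^ 2 <= 4 * ((eps * alpha) * (eps * beta))).
  { assert (1/4 <= alpha * beta) by nra.
    replace (4 * (eps * alpha * (eps * beta))) with (eps ^ 2 * (4 * (alpha * beta))) by ring.
    pose proof (pow2_ge_0 eps). nra. }
  pose proof (Ssym_ReKGamma_ge (eps * alpha) (eps * beta)
                ltac:(nra) ltac:(nra) ltac:(nra) ltac:(nra)) as HS.
  nra.
Qed.
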